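(* Let $\mathbb{K}$ be a perfect field, $\mathbf{u}_1,\dots,\mathbf{u}_t\in\mathbb{K}^{\mathbb{N}^n}$ with $J=\mathrm{ann}(\mathbf{u}_1,\dots,\mathbf{u}_t)$ zero-dimensional, and $B$ an integer such that for every $j$ the minimal polynomial of $X_j$ in $\mathbb{K}[X_1,\dots,X_n]/J$ has degree at most $B$. Fix $j\in\{1,\dots,n\}$ and a sequence of monomials $\mathscr{B}'_{j+1}$ in $\mathbb{K}[X_{j+1},\dots,X_n]$ (with $\mathscr{B}'_{n+1}=(1)$ if $j=n$) of cardinality at most $D_{j+1}$. Let $\mathscr{C}_{j+1}=\{b'X_j^k : b'\in\mathscr{B}'_{j+1},\ 0\le k\le B-1\}$, and let $\mathsf{M}$ be the matrix with rows indexed by pairs $(i,b')$, $1\le i\le t$, $b'\in\mathscr{C}_{j+1}$, columns indexed by $b\in\mathscr{C}_{j+1}$ sorted increasingly for the lexicographic order $X_j>\cdots>X_n$, and entries $\langle\mathbf{u}_i\mid bb'\rangle$. Let $\mathscr{B}'_j=(b'_1<\cdots<b'_{D'_j})$ be the monomials indexing the pivot columns of the reduced row echelon form of $\mathsf{M}$. Then $D'_j\le D_j$; and if $j\le n-1$, $\mathscr{B}'_{j+1}=\mathscr{B}_{j+1}$ and $J_j\cap\mathbb{K}[X_{j+1},\dots,X_n]=J_{j+1}$, then $\mathscr{B}'_j=\mathscr{B}_j$.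
   Context: For $m\in\mathbb{N}^n$, $\mathbf{X}^m=X_1^{m_1}\cdots X_n^{m_n}$; for a sequence $\mathbf{u}=(u_m)_m$ and $f=\sum_mf_m\mathbf{X}^m$, $\langle\mathbf{u}\mid f\rangle=\sum_mf_mu_m$, $f\cdot\mathbf{u}=(\langle\mathbf{u}\mid\mathbf{X}^mf\rangle)_m$, $\mathrm{ann}(\mathbf{u})$ is the ideal of $f$ with $f\cdot\mathbf{u}=0$, and $\mathrm{ann}$ of several sequences is the intersection. $\pi_j(\mathbf{u}_i)$ is the sequence indexed by $\mathbb{N}^{n-j+1}$ with $\langle\pi_j(\mathbf{u}_i)\mid(m_j,\dots,m_n)\rangle=\langle\mathbf{u}_i\mid(0,\dots,0,m_j,\dots,m_n)\rangle$; $J_j=\mathrm{ann}(\pi_j(\mathbf{u}_1),\dots,\pi_j(\mathbf{u}_t))\subset\mathbb{K}[X_j,\dots,X_n]$, $D_j=\dim_{\mathbb{K}}\mathbb{K}[X_j,\dots,X_n]/J_j$, and $\mathscr{B}_j$ is the monomial basis (standard monomials) of $\mathbb{K}[X_j,\dots,X_n]/J_j$ for the lexicographic order $X_j>\cdots>X_n$. *)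

From HB Require Import structures.
From mathcomp Require Import all_boot all_order all_algebra.
From mathcomp Require Import mpoly.
From Stdlib Require Import ClassicalEpsilon.

Set Implicit Arguments.
Unset Strict Implicit.
Unset Printing Implicit Defensive.

Import Order.TTheory GRing.Theory.
Local Open Scope ring_scope.

Definition perfect_field (K : fieldType) : Prop :=
  [pchar K] =i pred0 \/
  exists p : nat, p \in [pchar K] /\ forall x : K, exists y : K, y ^+ p = x.

Section Defs.
Variables (K : fieldType) (n : nat).

(* Sequences in K^(N^n) : functions 'X_{1..n} -> K. *)
Definition pairing (u : 'X_{1..n} -> K) (f : {mpoly K[n]}) : K :=
  \sum_(m <- msupp f) f@_m * u m.

Definition ann t (u : 'I_t -> 'X_{1..n} -> K) (f : {mpoly K[n]}) : Prop :=
  forall (i : 'I_t) (m : 'X_{1..n}), pairing (u i) ('X_[m] * f) = 0.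

(* Variables are 'I_n, variable X_k (1-based, paper) is index k-1.
   A monomial of K[X_j,...,X_n] (j 1-based, 1 <= j <= n+1) has zero exponent
   on X_1,...,X_{j-1}. *)
Definition mono_from (j : nat) (m : 'X_{1..n}) : Prop :=
  forall k : 'I_n, (k.+1 < j)%N -> m k = 0%N.

Definition poly_from (j : nat) (f : {mpoly K[n]}) : Prop :=
  forall m, m \in msupp f -> mono_from j m.

(* J_j = ann(pi_j(u_1),...,pi_j(u_t)) in K[X_j,...,X_n], via the embedding:
   <pi_j(u) | g> = <u | g> for g in K[X_j..X_n], and the shifts X^m' range
   over monomials of K[X_j..X_n]. *)
Definition Jj t (u : 'I_t -> 'X_{1..n} -> K) (j : nat) (f : {mpoly K[n]}) : Prop :=
  poly_from j f /\
  forall (i : 'I_t) (m : 'X_{1..n}), mono_from j m ->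
    pairing (u i) ('X_[m] * f) = 0.

Definition free_mod (I : {mpoly K[n]} -> Prop) (s : seq {mpoly K[n]}) : Prop :=
  forall c : 'I_(size s) -> K,
    I (\sum_(i < size s) c i *: s`_i) -> forall i, c i = 0.

Definition is_qdim (S I : {mpoly K[n]} -> Prop) (d : nat) : Prop :=
  (exists s : seq {mpoly K[n]}, size s = d /\ (forall p, p \in s -> S p) /\ free_mod I s)
  /\ (forall s : seq {mpoly K[n]}, (forall p, p \in s -> S p) -> free_mod I s ->
        (size s <= d)%N).

(* dim_K S/I (meaningful when finite, which is the case wherever it is used). *)
Definition qdim (S I : {mpoly K[n]} -> Prop) : nat :=
  epsilon (inhabits 0%N) (is_qdim S I).

Definition finite_quot (I : {mpoly K[n]} -> Prop) : Prop :=
  exists d : nat, forall s : seq {mpoly K[n]}, free_mod I s -> (size s <= d)%N.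

Definition Dj t (u : 'I_t -> 'X_{1..n} -> K) (j : nat) : nat :=
  qdim (poly_from j) (Jj u j).

Definition lexlt (m1 m2 : 'X_{1..n}) : bool :=
  [exists i : 'I_n, [forall k : 'I_n, (k < i)%N ==> (m1 k == m2 k)] && (m1 i < m2 i)%N].
Definition lexle (m1 m2 : 'X_{1..n}) : bool := (m1 == m2) || lexlt m1 m2.

Definition is_lexlead (f : {mpoly K[n]}) (m : 'X_{1..n}) : Prop :=
  m \in msupp f /\ forall m', m' \in msupp f -> lexle m' m.

Definition std_mono t (u : 'I_t -> 'X_{1..n} -> K) (j : nat) (m : 'X_{1..n}) : Prop :=
  mono_from j m /\ ~ (exists f, Jj u j f /\ is_lexlead f m).

(* Xpow j k : the exponent vector of X_j^k (j 1-based). *)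
Definition Xpow (j k : nat) : 'X_{1..n} :=
  [multinom (if (i : nat) == j.-1 then k else 0%N) | i < n].

Definition Cset (j : nat) (Bp : seq 'X_{1..n}) (B : nat) : seq 'X_{1..n} :=
  sort lexle (undup [seq (b' + Xpow j k)%MM | b' <- Bp, k <- iota 0 B]).

Definition Mmat t (u : 'I_t -> 'X_{1..n} -> K) (C : seq 'X_{1..n}) :
    'M[K]_(#|{: 'I_t * 'I_(size C)}|, size C) :=
  \matrix_(r < #|{: 'I_t * 'I_(size C)}|, c < size C)
    let: (i, a) := (enum_val r : 'I_t * 'I_(size C)) in pairing (u i) 'X_[(nth 0%MM C a + nth 0%MM C c)%MM].

End Defs.

Section RREF.
Variables (K : fieldType) (r c : nat).

Definition lead_pos (R : 'M[K]_(r, c)) (i : 'I_r) : option 'I_c :=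
  [pick p : 'I_c | (R i p != 0) && [forall q : 'I_c, (q < p)%N ==> (R i q == 0)]].

Definition is_rref (R : 'M[K]_(r, c)) : Prop :=
  (* zero rows at the bottom, leading positions strictly increasing *)
  (forall i1 i2 : 'I_r, (i1 < i2)%N -> forall p2, lead_pos R i2 = Some p2 ->
     exists2 p1, lead_pos R i1 = Some p1 & (p1 < p2)%N) /\
  (forall i p, lead_pos R i = Some p ->
     R i p = 1 /\ forall i', i' != i -> R i' p = 0).

Definition pivot_col (R : 'M[K]_(r, c)) (p : 'I_c) : bool :=
  [exists i : 'I_r, lead_pos R i == Some p].

Definition rref_of (M R : 'M[K]_(r, c)) : Prop :=
  is_rref R /\ exists2 P : 'M[K]_r, P \in unitmx & R = P *m M.

End RREF.

(* Each entry of M v is a pairing <u_i | b f_v> with b in C, where f_v is the polynomial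
   whose coefficients on the monomials of C are the entries of v; so f_v in J_j gives
   M v = 0. If such an f_v is a combination of pivot monomials, v is a kernel vector of the
   echelon form supported on its pivot columns, hence v = 0: the pivot monomials are
   linearly independent modulo J_j and D'_j <= D_j.
   Under the extra hypotheses every lex-standard monomial of J_j lies in C: its degree in
   X_j is < B because p(X_j) is in J_j for the minimal polynomial p of X_j, and its part
   in X_{j+1},...,X_n is standard for J_{j+1} = J_j ∩ K[X_{j+1},...,X_n]. Reducing by
   lex-leading monomials of J_j then writes every monomial of K[X_j,...,X_n] modulo J_j as
   a combination of standard monomials of C, so a polynomial killed by its shifts by C is
   in J_j, and the kernel of M is exactly J_j ∩ span C. A column is therefore a pivot iff
   its monomial is not the leading monomial of an element of J_j, i.e. iff it is standard. *)

From HB Require Import structures.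
From mathcomp Require Import all_boot all_order all_algebra.
From mathcomp Require Import mpoly ssrcomplements zify.
From Stdlib Require Import ClassicalEpsilon Classical.

Set Implicit Arguments.
Unset Strict Implicit.
Unset Printing Implicit Defensive.

Import Order.TTheory GRing.Theory.
Local Open Scope ring_scope.

Section LexOrder.
Variable n : nat.
Implicit Types m : 'X_{1..n}.

Definition mlexi m : n.-tuplelexi nat := multinom_val m.

Lemma mlexi_inj : injective mlexi.
Proof. by move=> [a] [b] /= ->. Qed.

Lemma lexltE m1 m2 : lexlt m1 m2 = (mlexi m1 < mlexi m2)%O.
Proof.
apply/existsP/ltxi_tuplePlt => -[i].
  by case/andP=> /forallP eq_lt lt_i; exists i => // k /(implyP (eq_lt k))/eqP.
move=> eq_lt lt_i; exists i; apply/andP; split=> //.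
by apply/forallP=> k; apply/implyP=> /eq_lt/eqP.
Qed.

Lemma lexleE m1 m2 : lexle m1 m2 = (mlexi m1 <= mlexi m2)%O.
Proof. by rewrite /lexle lexltE le_eqVlt (inj_eq mlexi_inj). Qed.

Lemma lexle_refl m : lexle m m.
Proof. by rewrite lexleE. Qed.

Lemma lexle_trans m2 m1 m3 : lexle m1 m2 -> lexle m2 m3 -> lexle m1 m3.
Proof. rewrite !lexleE; exact: le_trans. Qed.

Lemma lexle_lt_trans m2 m1 m3 : lexle m1 m2 -> lexlt m2 m3 -> lexlt m1 m3.
Proof. rewrite lexleE !lexltE; exact: le_lt_trans. Qed.

Lemma lexle_anti m1 m2 : lexle m1 m2 -> lexle m2 m1 -> m1 = m2.
Proof. by rewrite !lexleE => le12 le21; apply/mlexi_inj/le_anti/andP. Qed.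

Lemma lexle_total : total (@lexle n).
Proof. by move=> m1 m2; rewrite !lexleE le_total. Qed.

Lemma lexltNge m1 m2 : lexlt m1 m2 = ~~ lexle m2 m1.
Proof. by rewrite lexleE lexltE ltNge. Qed.

Lemma lexltW m1 m2 : lexlt m1 m2 -> lexle m1 m2.
Proof. by rewrite /lexle => ->; rewrite orbT. Qed.

Lemma lexltD2r m1 m2 m : lexlt m1 m2 -> lexlt (m1 + m)%MM (m2 + m)%MM.
Proof.
case/existsP=> i /andP[/forallP eq_lt lt_i]; apply/existsP; exists i.
rewrite !mnmDE ltn_add2r lt_i andbT; apply/forallP=> k; apply/implyP=> lt_ki.
by rewrite !mnmDE (eqP (implyP (eq_lt k) lt_ki)).
Qed.

Lemma lexleD2r m1 m2 m : lexle m1 m2 -> lexle (m1 + m)%MM (m2 + m)%MM.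
Proof. by case/orP=> [/eqP->|/(lexltD2r m)/lexltW]; rewrite ?lexle_refl. Qed.

Lemma lexlt_ind (P : 'X_{1..n} -> Prop) :
  (forall m, (forall m', lexlt m' m -> P m') -> P m) -> forall m, P m.
Proof.
have nat_wf (Q : nat -> Type) : (forall x, (forall y, (y < x)%O -> Q y) -> Q x) ->
    forall x, Q x.
  by move=> IH; elim/ltn_ind=> x IHx; apply: IH => y; rewrite ltEnat; apply: IHx.
move=> IH m; pose Q (s : n.-tuplelexi nat) := forall m, mlexi m = s -> P m.
suff: Q (mlexi m) by apply.
apply: (@ltxwf _ nat nat_wf n Q) => s IHs m' Em'; apply: IH => m'' lt_m''m'.
by apply: (IHs (mlexi m'')) => //; rewrite -Em' -lexltE.
Qed.

End LexOrder.

Section Pairing.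
Variables (K : fieldType) (n : nat) (v : 'X_{1..n} -> K).
Implicit Types (f g : {mpoly K[n]}) (m : 'X_{1..n}).

Lemma pairing_subset f s : uniq s -> {subset msupp f <= s} ->
  pairing v f = \sum_(m <- s) f@_m * v m.
Proof.
move=> uniq_s supp_s; rewrite (bigID (mem (msupp f))) /=.
rewrite [X in _ + X]big1 ?addr0 => [|m /memN_msupp_eq0 ->]; last by rewrite mul0r.
rewrite -big_filter; apply: perm_big; apply: uniq_perm; rewrite ?filter_uniq //.
by move=> m; rewrite mem_filter andb_idr //; apply: supp_s.
Qed.

Lemma pairing0 : pairing v 0 = 0.
Proof. by rewrite /pairing msupp0 big_nil. Qed.

Lemma pairingD f g : pairing v (f + g) = pairing v f + pairing v g.
Proof.
pose s := undup (msupp f ++ msupp g ++ msupp (f + g)).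
have sub_s h : {subset msupp h <= msupp f ++ msupp g ++ msupp (f + g)} ->
    pairing v h = \sum_(m <- s) h@_m * v m.
  by move=> sub_h; apply: pairing_subset => [|m /sub_h]; rewrite ?undup_uniq ?mem_undup.
rewrite !sub_s; first by rewrite -big_split; apply: eq_bigr => m _; rewrite mcoeffD mulrDl.
all: by move=> m; rewrite !mem_cat => ->; rewrite ?orbT.
Qed.

Lemma pairingZ c f : pairing v (c *: f) = c * pairing v f.
Proof.
rewrite (@pairing_subset _ (msupp f)) ?msupp_uniq //; last exact: msuppZ_le.
by rewrite /pairing big_distrr; apply: eq_bigr => m _ /=; rewrite mcoeffZ mulrA.
Qed.

Lemma pairing_sum (I : Type) (r : seq I) (P : pred I) (F : I -> {mpoly K[n]}) :
  pairing v (\sum_(i <- r | P i) F i) = \sum_(i <- r | P i) pairing v (F i).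
Proof. exact: (big_morph _ pairingD pairing0). Qed.

End Pairing.

Section PolyFrom.
Variables (K : fieldType) (n j : nat).
Implicit Types (f g : {mpoly K[n]}) (m : 'X_{1..n}).

Lemma mono_fromD m1 m2 : mono_from j m1 -> mono_from j m2 -> mono_from j (m1 + m2)%MM.
Proof. by move=> m1j m2j k lt_kj; rewrite mnmDE m1j // m2j. Qed.

Lemma mono_from0 : mono_from j (0%MM : 'X_{1..n}).
Proof. by move=> k _; rewrite mnm0E. Qed.

Lemma mono_fromS m : mono_from j.+1 m -> mono_from j m.
Proof. by move=> mj k lt_kj; apply/mj/ltnW. Qed.

Lemma poly_fromD f g : poly_from j f -> poly_from j g -> poly_from j (f + g).
Proof. by move=> fj gj m /msuppD_le; rewrite mem_cat => /orP[/fj|/gj]. Qed.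

Lemma poly_fromZ c f : poly_from j f -> poly_from j (c *: f).
Proof. by move=> fj m /msuppZ_le /fj. Qed.

Lemma poly_fromB f g : poly_from j f -> poly_from j g -> poly_from j (f - g).
Proof. by move=> fj gj; rewrite -scaleN1r; apply/poly_fromD/poly_fromZ. Qed.

Lemma poly_from_sum (I : Type) (r : seq I) (P : pred I) (F : I -> {mpoly K[n]}) :
  (forall i, P i -> poly_from j (F i)) -> poly_from j (\sum_(i <- r | P i) F i).
Proof.
move=> Fj; elim/big_rec: _ => [m|i f Pi fj]; first by rewrite msupp0.
exact/poly_fromD/fj/Fj.
Qed.

Lemma poly_fromX m : mono_from j m -> poly_from j ('X_[m] : {mpoly K[n]}).
Proof. by move=> mj m'; rewrite msuppX mem_seq1 => /eqP->. Qed.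

Lemma msuppXM m f m' : m' \in msupp ('X_[m] * f) ->
  exists2 m'', m'' \in msupp f & m' = (m + m'')%MM.
Proof. by rewrite -commr_mpolyX (perm_mem (msuppMX _ _)) => /mapP[m'']; exists m''. Qed.

Lemma poly_fromXM m f : mono_from j m -> poly_from j f -> poly_from j ('X_[m] * f).
Proof. by move=> mj fj m' /msuppXM[m'' /fj m''j ->]; apply: mono_fromD. Qed.

End PolyFrom.

Section IdealJj.
Variables (K : fieldType) (n t : nat) (u : 'I_t -> 'X_{1..n} -> K) (j : nat).
Implicit Types (f g : {mpoly K[n]}) (m : 'X_{1..n}).
Local Notation J := (Jj u j).

Lemma Jj_poly_from f : J f -> poly_from j f.
Proof. by case. Qed.

Lemma Jj_pairing f i : J f -> pairing (u i) f = 0.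
Proof. by case=> _ /(_ i 0%MM (@mono_from0 n j)); rewrite mpolyX0 mul1r. Qed.

Lemma Jj0 : J 0.
Proof.
split=> [m|i m _]; first by rewrite msupp0.
by rewrite mulr0 pairing0.
Qed.

Lemma JjD f g : J f -> J g -> J (f + g).
Proof.
case=> fj f0 [gj g0]; split=> [|i m mj]; first exact: poly_fromD.
by rewrite mulrDr pairingD f0 // g0 // addr0.
Qed.

Lemma JjZ c f : J f -> J (c *: f).
Proof.
case=> fj f0; split=> [|i m mj]; first exact: poly_fromZ.
by rewrite -scalerAr pairingZ f0 // mulr0.
Qed.

Lemma JjXM m f : mono_from j m -> J f -> J ('X_[m] * f).
Proof.
move=> mj [fj f0]; split=> [|i m' m'j]; first exact: poly_fromXM.
by rewrite mulrA -mpolyXD; apply/f0/mono_fromD.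
Qed.

Lemma JjM g f : poly_from j g -> J f -> J (g * f).
Proof.
move=> gj Jf; rewrite (mpolyE g) big_seq big_distrl /=.
elim/big_rec: _ => [|m h m_g Jh]; first exact: Jj0.
by apply: JjD Jh; rewrite -scalerAl; apply/JjZ/JjXM/Jf/gj.
Qed.

Lemma ann_Jj f : ann u f -> poly_from j f -> J f.
Proof. by move=> f0 fj; split=> // i m _; apply: f0. Qed.

End IdealJj.

Lemma ex_maxn_prop (P : nat -> Prop) b : P 0%N -> (forall k, P k -> (k <= b)%N) ->
  exists2 k, P k & forall k', P k' -> (k' <= k)%N.
Proof.
elim: b => [|b IHb] P0 le_b; first by exists 0%N => // k /le_b.
have [Pb1|NPb1] := classic (P b.+1); first by exists b.+1.
apply: IHb => // k Pk; rewrite -ltnS ltn_neqAle le_b // andbT.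
by apply: contra_notN NPb1 => /eqP <-.
Qed.

Section QuotientDimension.
Variables (K : fieldType) (n : nat) (S I : {mpoly K[n]} -> Prop).

Lemma size_free_le_qdim b :
    (forall s, (forall p, p \in s -> S p) -> free_mod I s -> (size s <= b)%N) ->
  forall s, (forall p, p \in s -> S p) -> free_mod I s -> (size s <= qdim S I)%N.
Proof.
move=> le_b; pose P k := exists s, size s = k /\ (forall p, p \in s -> S p) /\ free_mod I s.
have [|k|d Pd max_d] := @ex_maxn_prop P b.
- by exists [::]; split=> //; split=> // c _ [].
- by case=> s [<- [Ss free_s]]; apply: le_b.
have dim_d : is_qdim S I d by split=> // s Ss free_s; apply: max_d; exists s.
by case: (epsilon_spec (inhabits 0%N) (is_qdim S I) (ex_intro _ d dim_d)) => _.
Qed.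

Lemma free_mod_map (T : eqType) (F : T -> {mpoly K[n]}) (r : seq T) : uniq r ->
    (forall lam : T -> K, I (\sum_(k <- r) lam k *: F k) -> {in r, forall k, lam k = 0}) ->
  free_mod I (map F r).
Proof.
move=> uniq_r free_r c Ic i; have lt_ir : (i < size r)%N by rewrite -(size_map F).
pose x0 := tnth (in_tuple r) (Ordinal lt_ir).
pose lam k := \sum_(i' < size (map F r) | nth x0 r i' == k) c i'.
suff /free_r/(_ _ (mem_nth x0 lt_ir)) : I (\sum_(k <- r) lam k *: F k).
  rewrite /lam (bigD1 i) //= big1 ?addr0 // => i' /andP[/eqP nth_i' ne_i'i].
  case/negP: ne_i'i; rewrite -val_eqE /= -(nth_uniq x0 _ _ uniq_r) ?nth_i' //.
  by rewrite -(size_map F).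
have lt_i'r (i' : 'I_(size (map F r))) : (i' < size r)%N by rewrite -(size_map F).
congr I: Ic; symmetry; rewrite /lam; under eq_bigr do rewrite scaler_suml.
rewrite (exchange_big_dep xpredT) //=; apply: eq_bigr => i' _.
rewrite (eq_bigl (pred1 (nth x0 r i'))) => [|k /=]; last exact: eq_sym.
by rewrite -big_filter filter_pred1_uniq ?big_seq1 ?(nth_map x0) ?mem_nth.
Qed.

End QuotientDimension.

Section RowEchelon.
Variables (K : fieldType) (r c : nat) (R : 'M[K]_(r, c)).
Implicit Types (i : 'I_r) (p q : 'I_c) (v : 'cV[K]_c).

Lemma lead_pos_some i p : lead_pos R i = Some p ->
  R i p != 0 /\ forall q, (q < p)%N -> R i q = 0.
Proof.
rewrite /lead_pos; case: pickP => // p' /andP[nz_p' /forallP zero_lt] [<-].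
by split=> // q lt_qp; apply/eqP/(implyP (zero_lt q)).
Qed.

Lemma lead_pos_none i : lead_pos R i = None -> forall q, R i q = 0.
Proof.
rewrite /lead_pos; case: pickP => // no_lead _ q; apply/eqP/contraT => nz_q.
case: (@arg_minnP _ q (fun q => R i q != 0) (@nat_of_ord c) nz_q) => q0 nz_q0 min_q0.
case/negP: (no_lead q0); rewrite nz_q0; apply/forallP => q'.
by apply/implyP=> lt_q'q0; apply: contraTT lt_q'q0 => /min_q0; rewrite -leqNgt.
Qed.

Lemma pivot_colP p : reflect (exists i, lead_pos R i = Some p) (pivot_col R p).
Proof. by apply: (iffP existsP) => -[i /eqP lead_i]; exists i; rewrite ?lead_i. Qed.

Hypothesis R_rref : is_rref R.

Lemma rref_lead1 i p : lead_pos R i = Some p -> R i p = 1.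
Proof. by case: R_rref => _ rref2 /rref2[]. Qed.

Lemma rref_pivot_col0 i p i' : lead_pos R i = Some p -> i' != i -> R i' p = 0.
Proof. by case: R_rref => _ rref2 /rref2[_]; apply. Qed.

Lemma rref_mulmx_lead i p v : lead_pos R i = Some p -> v p 0 = 1 ->
  (forall q, (p < q)%N -> v q 0 = 0) -> (R *m v) i 0 = 1.
Proof.
move=> lead_i vp1 v_gt; rewrite mxE (bigD1 p) //= rref_lead1 // vp1 mulr1.
rewrite big1 ?addr0 // => q ne_qp; case: (ltngtP q p) => [lt_qp|lt_pq|eq_qp].
- by rewrite (lead_pos_some lead_i).2 // mul0r.
- by rewrite v_gt // mulr0.
- by case/eqP: ne_qp; apply: val_inj.
Qed.

(* The witness is e_cc minus, at each pivot column q, the entry of column cc in the row leading at q. *)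
Lemma rref_kernel_nonpivot cc : ~~ pivot_col R cc -> exists v,
  [/\ v cc 0 = 1, forall q, (cc < q)%N -> v q 0 = 0 & R *m v = 0].
Proof.
move=> npiv_cc; pose w q := \sum_(i | lead_pos R i == Some q) R i cc.
have w0 q : ~~ pivot_col R q -> w q = 0.
  by move=> npiv_q; apply: big1 => i /eqP lead_i; case/negP: npiv_q; apply/pivot_colP; exists i.
exists (\col_q ((q == cc)%:R - w q)); split.
- by rewrite mxE eqxx w0 // subr0.
- move=> q lt_ccq; rewrite mxE -val_eqE /= (gtn_eqF lt_ccq) sub0r.
  by apply/eqP; rewrite oppr_eq0; apply/eqP/big1 => i /eqP/lead_pos_some[_ ->].
apply/matrixP=> i k; rewrite !mxE.
under eq_bigr do rewrite mxE mulrBr.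
rewrite sumrB (bigD1 cc) //= eqxx mulr1 big1 ?addr0 => [|q /negbTE->]; last by rewrite mulr0.
apply/eqP; rewrite subr_eq0; apply/eqP; rewrite /w.
under eq_bigr do rewrite big_distrr.
rewrite (exchange_big_dep xpredT) //=.
have row_piv i0 : \sum_(q | lead_pos R i0 == Some q) R i q * R i0 cc =
    if lead_pos R i0 is Some p then R i p * R i0 cc else 0.
  case: (lead_pos R i0) => [p|]; last by rewrite big_pred0.
  by rewrite (eq_bigl (pred1 p)) ?big_pred1_eq // => q /=; rewrite eq_sym.
under eq_bigr do rewrite row_piv.
case lead_i: (lead_pos R i) => [p|]; last first.
  rewrite lead_pos_none // big1 // => i0 _.
  by case: (lead_pos R i0) => // p; rewrite lead_pos_none ?mul0r.
rewrite (bigD1 i) //= lead_i (rref_lead1 lead_i) mul1r big1 ?addr0 // => i0 ne_i0i.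
by case lead_i0: (lead_pos R i0) => [p0|] //; rewrite (rref_pivot_col0 lead_i0) ?mul0r // eq_sym.
Qed.

Lemma rref_kernel_on_pivots v : R *m v = 0 ->
  (forall q, v q 0 != 0 -> pivot_col R q) -> v = 0.
Proof.
move=> Rv0 supp_v; apply/matrixP=> q k; rewrite ord1 mxE.
have [//|/supp_v/pivot_colP[i lead_i]] := eqVneq (v q 0) 0.
have /matrixP/(_ i 0) := Rv0; rewrite !mxE (bigD1 q) //= (rref_lead1 lead_i) mul1r.
rewrite big1 ?addr0 // => q' ne_q'q.
have [->|/supp_v/pivot_colP[i' lead_i']] := eqVneq (v q' 0) 0; first by rewrite mulr0.
rewrite (rref_pivot_col0 lead_i') ?mul0r //; apply: contraNneq ne_q'q => eq_i.
by move: lead_i'; rewrite -eq_i lead_i => -[->].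
Qed.

End RowEchelon.

Lemma rref_of_mulmx_eq0 (K : fieldType) (r c : nat) (M R : 'M[K]_(r, c)) (v : 'cV[K]_c) :
  rref_of M R -> (R *m v = 0 <-> M *m v = 0).
Proof.
case=> _ [P unit_P ->]; rewrite -mulmxA; split=> [|->]; last exact: mulmx0.
by move/(congr1 (mulmx (invmx P))); rewrite mulKmx // mulmx0.
Qed.

Section LeadingMonomial.
Variables (K : fieldType) (n : nat).
Implicit Types (f : {mpoly K[n]}) (m : 'X_{1..n}).

Lemma lexleadXM f m a : is_lexlead f m -> is_lexlead ('X_[a] * f) (a + m)%MM.
Proof.
case=> m_f max_m; split.
  by rewrite -commr_mpolyX (perm_mem (msuppMX _ _)); apply: map_f.
by move=> _ /msuppXM[m' /max_m le_m'm ->]; rewrite ![(a + _)%MM]addmC lexleD2r.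
Qed.

Lemma msupp_lexlead_reduce f m : is_lexlead f m ->
  forall m', m' \in msupp ('X_[m] - (f@_m)^-1 *: f) -> lexlt m' m.
Proof.
case=> m_f max_m m'; rewrite mcoeff_msupp mcoeffB mcoeffZ mcoeffX.
have [->|ne_m'm] := eqVneq m' m; first by rewrite mulVf -?mcoeff_msupp // subrr eqxx.
rewrite sub0r oppr_eq0 mulf_eq0 invr_eq0 negb_or -!mcoeff_msupp => /andP[_ /max_m].
by rewrite /lexle (negbTE ne_m'm).
Qed.

End LeadingMonomial.

Section ColumnPolynomial.
Variables (K : fieldType) (n : nat) (C : seq 'X_{1..n}).
Local Notation N := (size C).
Local Notation Cq q := (nth 0%MM C q).
Implicit Types (v : 'cV[K]_N) (m : 'X_{1..n}).

Definition col_mpoly v : {mpoly K[n]} := \sum_q v q 0 *: 'X_[Cq q].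

Lemma col_mpoly_is_linear : linear col_mpoly.
Proof.
move=> a v w; rewrite /col_mpoly scaler_sumr -big_split; apply: eq_bigr => q _ /=.
by rewrite !mxE scalerDl scalerA.
Qed.

HB.instance Definition _ :=
  GRing.isLinear.Build K 'cV[K]_N {mpoly K[n]} _ col_mpoly col_mpoly_is_linear.

Lemma col_mpoly_delta c : col_mpoly (delta_mx c 0) = 'X_[Cq c].
Proof.
rewrite /col_mpoly (bigD1 c) //= mxE !eqxx scale1r big1 ?addr0 // => q ne_qc.
by rewrite mxE (negbTE ne_qc) scale0r.
Qed.

Lemma mcoeff_col_mpoly v m : (col_mpoly v)@_m = \sum_q v q 0 * (Cq q == m)%:R.
Proof. by rewrite raddf_sum; apply: eq_bigr => q _ /=; rewrite mcoeffZ mcoeffX. Qed.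

Lemma Mmat_mulmx_eq0_shifts t (u : 'I_t -> 'X_{1..n} -> K) v : Mmat u C *m v = 0 <->
  forall i (a : 'I_N), pairing (u i) ('X_[Cq a] * col_mpoly v) = 0.
Proof.
have shift_pairing i (a : 'I_N) : pairing (u i) ('X_[Cq a] * col_mpoly v) =
    \sum_(q < N) pairing (u i) 'X_[(Cq a + Cq q)%MM] * v q 0.
  rewrite mulr_sumr pairing_sum; apply: eq_bigr => q _.
  by rewrite -scalerAr -mpolyXD pairingZ mulrC.
have Mmat_row r0 : (Mmat u C *m v) r0 0 =
    pairing (u (enum_val r0).1) ('X_[Cq (enum_val r0).2] * col_mpoly v).
  by rewrite mxE shift_pairing; apply: eq_bigr => q _; rewrite mxE; case: (enum_val r0).
split=> [Mv0 i a | Mv0].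
  by move: (Mmat_row (enum_rank (i, a))); rewrite enum_rankK Mv0 mxE => <-.
by apply/matrixP=> r0 k; rewrite ord1 Mmat_row Mv0 mxE.
Qed.

Hypotheses (C_uniq : uniq C) (C_sorted : sorted (@lexle n) C).

Lemma nth_C_inj : injective (fun q : 'I_N => Cq q).
Proof. by move=> q1 q2 /eqP; rewrite nth_uniq // => /eqP/val_inj. Qed.

Lemma lexle_nth_C (q1 q2 : 'I_N) : lexle (Cq q1) (Cq q2) = (q1 <= q2)%N.
Proof.
have le_nth (q q' : 'I_N) : (q <= q')%N -> lexle (Cq q) (Cq q').
  rewrite leq_eqVlt => /orP[/eqP/val_inj->|lt_qq']; first exact: lexle_refl.
  by apply: (sorted_ltn_nth (@lexle_trans n) 0%MM C_sorted); rewrite ?inE.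
apply/idP/idP => [le12|/le_nth//]; rewrite leqNgt; apply/negP => lt21.
have /nth_C_inj eq12 : Cq q1 = Cq q2 by apply: lexle_anti le12 (le_nth _ _ (ltnW lt21)).
by rewrite eq12 ltnn in lt21.
Qed.

Lemma lexlt_nth_C (q1 q2 : 'I_N) : lexlt (Cq q1) (Cq q2) = (q1 < q2)%N.
Proof. by rewrite lexltNge lexle_nth_C -ltnNge. Qed.

Lemma col_mpoly_lexlead v c : v c 0 = 1 -> (forall q : 'I_N, (c < q)%N -> v q 0 = 0) ->
  is_lexlead (col_mpoly v) (Cq c).
Proof.
move=> vc1 v_gt; split.
  rewrite mcoeff_msupp mcoeff_col_mpoly (bigD1 c) //= eqxx vc1 mulr1 big1 ?addr0 ?oner_eq0 //.
  by move=> q ne_qc; rewrite (inj_eq nth_C_inj) (negbTE ne_qc) mulr0.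
move=> m; rewrite mcoeff_msupp mcoeff_col_mpoly; apply: contraNT => not_le.
apply/eqP/big1 => q _; have [lt_cq|le_qc] := ltnP c q; first by rewrite v_gt // mul0r.
case: eqP => [eq_qm|_]; last by rewrite mulr0.
by rewrite -eq_qm lexle_nth_C le_qc in not_le.
Qed.

End ColumnPolynomial.

Arguments col_mpoly {K n} C v.

Lemma size_free_Jj_le_Dj (K : fieldType) (n t : nat) (u : 'I_t -> 'X_{1..n} -> K) j :
    finite_quot (ann u) ->
  forall s, (forall p, p \in s -> poly_from j p) -> free_mod (Jj u j) s ->
  (size s <= Dj u j)%N.
Proof.
case=> b le_b; apply: size_free_le_qdim => s s_j free_s; apply: le_b => c ann_c.
apply/free_s/(ann_Jj ann_c)/poly_from_sum => i _; exact/poly_fromZ/s_j/mem_nth.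
Qed.

Section MmatKernel.
Variables (K : fieldType) (n t : nat) (u : 'I_t -> 'X_{1..n} -> K) (j : nat).
Variable C : seq 'X_{1..n}.
Hypotheses (C_uniq : uniq C) (C_sorted : sorted (@lexle n) C).
Hypothesis C_mono : forall m, m \in C -> mono_from j m.
Local Notation N := (size C).
Local Notation Cq q := (nth 0%MM C q).
Local Notation J := (Jj u j).
Implicit Types (v : 'cV[K]_N) (f h : {mpoly K[n]}) (m : 'X_{1..n}).

Lemma nth_C_onto m : m \in C -> exists c : 'I_N, Cq c = m.
Proof.
move=> m_C; have lt_mC : (index m C < N)%N by rewrite index_mem.
by exists (Ordinal lt_mC); rewrite nth_index.
Qed.

Lemma nth_C_mono (q : 'I_N) : mono_from j (Cq q).
Proof. exact/C_mono/mem_nth. Qed.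

Lemma poly_from_col_mpoly v : poly_from j (col_mpoly C v).
Proof. by apply: poly_from_sum => q _; apply/poly_fromZ/poly_fromX/nth_C_mono. Qed.

Lemma Mmat_mulmx_eq0_of_Jj v : J (col_mpoly C v) -> Mmat u C *m v = 0.
Proof. by move=> Jv; apply/Mmat_mulmx_eq0_shifts => i a; apply/Jj_pairing/JjXM/Jv/nth_C_mono. Qed.

Lemma rref_pivots_free R : rref_of (Mmat u C) R ->
  free_mod J [seq 'X_[Cq q] | q : 'I_N <- [seq q <- enum 'I_N | pivot_col R q]].
Proof.
move=> rref_R; apply: free_mod_map; first by rewrite filter_uniq ?enum_uniq.
move=> lam J_lam q; rewrite mem_filter mem_enum andbT => piv_q.
pose v := \col_q (if pivot_col R q then lam q else 0).
suff /matrixP/(_ q 0) : v = 0 by rewrite !mxE piv_q.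
apply: (rref_kernel_on_pivots rref_R.1) => [|q']; last first.
  by rewrite mxE; case: pivot_col; rewrite ?eqxx.
apply/(rref_of_mulmx_eq0 _ rref_R)/Mmat_mulmx_eq0_of_Jj; congr J: J_lam.
rewrite big_filter big_mkcond big_enum /=; apply: eq_bigr => q' _.
by rewrite mxE; case: pivot_col; rewrite ?scale0r.
Qed.

Hypothesis C_std : forall m, std_mono u j m -> m \in C.

Definition std_reducible (P : pred 'X_{1..n}) f := exists v,
  (forall q, v q 0 != 0 -> std_mono u j (Cq q) /\ P (Cq q)) /\ J (f - col_mpoly C v).

Section BelowMonomial.
Variable m : 'X_{1..n}.
Hypothesis reducible_lt :
  forall m', lexlt m' m -> mono_from j m' -> std_reducible ((@lexle n)^~ m') 'X_[m'].

Lemma std_reducible_lt h : poly_from j h -> (forall m', m' \in msupp h -> lexlt m' m) ->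
  std_reducible ((@lexlt n)^~ m) h.
Proof.
move=> h_j h_lt; suff: forall s, {subset s <= msupp h} ->
    std_reducible ((@lexlt n)^~ m) (\sum_(m' <- s) h@_m' *: 'X_[m']).
  by move/(_ (msupp h) (fun x xs => xs)); rewrite -mpolyE.
elim=> [|m' s IHs] sub_s.
  by exists 0; split=> [q|]; rewrite ?mxE ?eqxx // big_nil linear0 subrr; apply: Jj0.
have m'_h : m' \in msupp h by apply/sub_s/mem_head.
have [v1 [std_v1 J1]] : std_reducible ((@lexlt n)^~ m) (\sum_(m' <- s) h@_m' *: 'X_[m']).
  by apply: IHs => x xs; apply/sub_s; rewrite inE xs orbT.
have [v2 [std_v2 J2]] := reducible_lt (h_lt m' m'_h) (h_j m' m'_h).
exists (v1 + h@_m' *: v2); split=> [q|].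
  rewrite !mxE; have [v1q0|/std_v1//] := eqVneq (v1 q 0) 0.
  rewrite v1q0 add0r mulf_eq0 negb_or => /andP[_ /std_v2[std_q le_q]].
  by split=> //; apply: lexle_lt_trans le_q (h_lt m' m'_h).
rewrite linearD linearZ big_cons [_ *: 'X_[m'] + _]addrC opprD addrACA -scalerBr.
exact: JjD J1 (JjZ _ J2).
Qed.

Lemma lexlead_std_reducible f : J f -> is_lexlead f m -> mono_from j m ->
  std_reducible ((@lexlt n)^~ m) 'X_[m].
Proof.
move=> Jf lead_f m_j; pose h := 'X_[m] - (f@_m)^-1 *: f.
have h_j : poly_from j h by apply/poly_fromB/poly_fromZ/Jj_poly_from/Jf/poly_fromX.
have [v [std_v Jv]] := std_reducible_lt h_j (msupp_lexlead_reduce lead_f).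
exists v; split=> //; rewrite -[X in X - _](subrK ((f@_m)^-1 *: f)) addrAC.
exact: JjD Jv (JjZ _ Jf).
Qed.

End BelowMonomial.

Lemma std_reducible_mono m : mono_from j m -> std_reducible ((@lexle n)^~ m) 'X_[m].
Proof.
elim/lexlt_ind: m => m IH m_j; have [std_m|nstd_m] := classic (std_mono u j m).
  have [c Cc] := nth_C_onto (C_std std_m); exists (delta_mx c 0); split=> [q|].
    by rewrite mxE andbT; have [->|] := eqVneq q c; rewrite ?eqxx // Cc lexle_refl.
  by rewrite col_mpoly_delta Cc subrr; apply: Jj0.
have [f [Jf lead_f]] : exists f, J f /\ is_lexlead f m by apply: NNPP => no_f; apply: nstd_m.
have [v [std_v Jv]] := lexlead_std_reducible IH Jf lead_f m_j.
by exists v; split=> // q /std_v[std_q /lexltW].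
Qed.

Lemma Jj_of_shifts f : poly_from j f ->
  (forall i (a : 'I_N), pairing (u i) ('X_[Cq a] * f) = 0) -> J f.
Proof.
move=> f_j shifts0; split=> // i m m_j; have [v [_ Jv]] := std_reducible_mono m_j.
rewrite -[X in X * f](subrK (col_mpoly C v)) mulrDl pairingD.
rewrite [_ * f]mulrC (Jj_pairing _ (JjM f_j Jv)) add0r.
rewrite mulr_suml pairing_sum big1 // => q _.
by rewrite -scalerAl pairingZ shifts0 mulr0.
Qed.

Lemma Mmat_mulmx_eq0_Jj v : Mmat u C *m v = 0 <-> J (col_mpoly C v).
Proof.
split=> [/Mmat_mulmx_eq0_shifts|]; last exact: Mmat_mulmx_eq0_of_Jj.
exact/Jj_of_shifts/poly_from_col_mpoly.
Qed.

Lemma lexlead_Jj_kernel f (c : 'I_N) : J f -> is_lexlead f (Cq c) -> exists v,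
  [/\ v c 0 = 1, forall q : 'I_N, (c < q)%N -> v q 0 = 0 & Mmat u C *m v = 0].
Proof.
move=> Jf lead_f; have [w [std_w Jw]] :=
  lexlead_std_reducible (fun m' _ => @std_reducible_mono m') Jf lead_f (nth_C_mono c).
have w0 (q : 'I_N) : (c <= q)%N -> w q 0 = 0.
  move=> le_cq; apply/eqP; apply: contraTT le_cq => /std_w[_].
  by rewrite lexlt_nth_C // -ltnNge.
exists (delta_mx c 0 - w); split=> [|q lt_cq|].
- by rewrite !mxE !eqxx w0 // subr0.
- by rewrite !mxE -val_eqE /= (gtn_eqF lt_cq) w0 ?(ltnW lt_cq) // subr0.
- by apply/Mmat_mulmx_eq0_Jj; rewrite linearB /= col_mpoly_delta.
Qed.

Lemma pivot_col_std_mono R (c : 'I_N) : rref_of (Mmat u C) R ->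
  pivot_col R c <-> std_mono u j (Cq c).
Proof.
move=> rref_R; have R_rref := rref_R.1; split.
  case/pivot_colP=> i lead_i; split=> [|[f [Jf lead_f]]]; first exact: nth_C_mono.
  have [v [vc1 v_gt Mv0]] := lexlead_Jj_kernel Jf lead_f.
  have /matrixP/(_ i 0) := (rref_of_mulmx_eq0 _ rref_R).2 Mv0.
  by rewrite (rref_mulmx_lead R_rref lead_i vc1 v_gt) mxE => /eqP; rewrite oner_eq0.
case=> _ nlead; apply: contraT => npiv; case: nlead.
have [v [vc1 v_gt Rv0]] := rref_kernel_nonpivot R_rref npiv.
exists (col_mpoly C v); split; last exact: col_mpoly_lexlead.
exact/Mmat_mulmx_eq0_Jj/(rref_of_mulmx_eq0 _ rref_R).
Qed.

Lemma mem_pivot_monomials R m : rref_of (Mmat u C) R ->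
  m \in [seq Cq q | q : 'I_N <- [seq q <- enum 'I_N | pivot_col R q]] <-> std_mono u j m.
Proof.
move=> rref_R; split=> [/mapP[q]|std_m].
  by rewrite mem_filter => /andP[/(pivot_col_std_mono _ rref_R) std_q _] ->.
have [c Cc] := nth_C_onto (C_std std_m); apply/mapP; exists c => //.
by rewrite mem_filter mem_enum andbT; apply/(pivot_col_std_mono _ rref_R); rewrite Cc.
Qed.

End MmatKernel.

Section UnivariateInMpoly.
Variables (K : fieldType) (n : nat) (i : 'I_n).

Lemma lexle_mulmnU k1 k2 : (k1 <= k2)%N -> lexle (U_(i) *+ k1)%MM (U_(i) *+ k2)%MM.
Proof.
rewrite leq_eqVlt => /orP[/eqP->|lt_k12]; first exact: lexle_refl.
apply/lexltW/existsP; exists i; rewrite !mulmnE !mnm1E eqxx !mul1n lt_k12 andbT.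
apply/forallP=> k; apply/implyP=> lt_ki.
have /negbTE ne_ik : i != k by rewrite -val_eqE /= gtn_eqF.
by rewrite !mulmnE !mnm1E ne_ik.
Qed.

Lemma horner_mpolyX (p : {poly K}) :
  (map_poly (@mpolyC n K) p).['X_i] = \sum_(k < size p) p`_k *: 'X_[U_(i) *+ k].
Proof.
rewrite horner_coef size_map_poly; apply: eq_bigr => k _.
by rewrite coef_map /= mul_mpolyC mpolyXn.
Qed.

Lemma lexlead_horner_mpolyX (p : {poly K}) : p != 0 ->
  is_lexlead (map_poly (@mpolyC n K) p).['X_i] (U_(i) *+ (size p).-1)%MM.
Proof.
move=> nz_p; have lt_dp : ((size p).-1 < size p)%N by rewrite prednK // size_poly_gt0.
have mU_inj : injective (fun k => (U_(i) *+ k)%MM).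
  by move=> k1 k2 /mnmP/(_ i); rewrite !mulmnE mnm1E eqxx !mul1n.
have coefE m : (map_poly (@mpolyC n K) p).['X_i]@_m =
    \sum_(k < size p) p`_k * ((U_(i) *+ k)%MM == m)%:R.
  by rewrite horner_mpolyX raddf_sum; apply: eq_bigr => k _ /=; rewrite mcoeffZ mcoeffX.
split=> [|m]; rewrite mcoeff_msupp coefE.
  rewrite (bigD1 (Ordinal lt_dp)) //= eqxx mulr1 big1 ?addr0 => [|k ne_kd].
    by rewrite -lead_coefE lead_coef_eq0.
  by rewrite (inj_eq mU_inj) (negbTE (ne_kd : (k : nat) != _)) mulr0.
apply: contraNT => not_le; apply/eqP/big1 => k _.
case: eqP => [eq_km|_]; last by rewrite mulr0.
have le_kd : (k <= (size p).-1)%N by rewrite -ltnS prednK ?size_poly_gt0.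
by rewrite -eq_km lexle_mulmnU in not_le.
Qed.

End UnivariateInMpoly.

Section Cset.
Variables (n B j : nat) (Bp : seq 'X_{1..n}).
Local Notation C := (Cset j Bp B).
Implicit Types m : 'X_{1..n}.

Lemma Cset_uniq : uniq C.
Proof. by rewrite sort_uniq undup_uniq. Qed.

Lemma Cset_sorted : sorted (@lexle n) C.
Proof. exact/sort_sorted/lexle_total. Qed.

Lemma mem_Cset m : m \in C <->
  exists b' k, [/\ b' \in Bp, (k < B)%N & m = (b' + Xpow n j k)%MM].
Proof.
rewrite mem_sort mem_undup; split=> [/allpairsP[[b' k] /= [b'_Bp]]|[b' [k [b'_Bp lt_kB ->]]]].
  by rewrite mem_iota => lt_kB ->; exists b', k.
by apply/allpairsP; exists (b', k); rewrite mem_iota.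
Qed.

Lemma Xpow_mono k : mono_from j (Xpow n j k).
Proof.
move=> i lt_ij; rewrite mnmE; case: eqP => // eq_ij.
by move: lt_ij; rewrite eq_ij; case: (j) => //= j'; rewrite ltnn.
Qed.

Lemma Cset_mono : (forall b, b \in Bp -> mono_from j.+1 b) ->
  forall m, m \in C -> mono_from j m.
Proof.
move=> Bp_mono m /mem_Cset[b' [k [b'_Bp _ ->]]].
exact/mono_fromD/Xpow_mono/mono_fromS/Bp_mono.
Qed.

End Cset.

Section StandardMonomialsInCset.
Variables (K : fieldType) (n t : nat) (u : 'I_t -> 'X_{1..n} -> K) (B j : nat).
Variables (Bp : seq 'X_{1..n}) (jo : 'I_n).
Hypothesis jo_j : jo.+1 = j.
Implicit Types (f : {mpoly K[n]}) (m : 'X_{1..n}).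

Lemma Xpow_mulmnU k : Xpow n j k = (U_(jo) *+ k)%MM.
Proof.
apply/mnmP=> i; rewrite mnmE mulmnE mnm1E -jo_j /= eq_sym -val_eqE /=.
by case: eqP; rewrite ?mul1n ?mul0n.
Qed.

Lemma mono_from_split m : mono_from j m ->
  mono_from j.+1 (m - Xpow n j (m jo))%MM /\ m = (m - Xpow n j (m jo) + Xpow n j (m jo))%MM.
Proof.
move=> m_j; rewrite Xpow_mulmnU; split.
  move=> k; rewrite ltnS -jo_j ltnS leq_eqVlt mnmBE mulmnE mnm1E.
  case/orP=> [/eqP/val_inj->|lt_kjo]; first by rewrite eqxx mul1n subnn.
  by rewrite m_j ?sub0n // -jo_j ltnS.
rewrite submK //; apply/mnm_lepP=> i; rewrite mulmnE mnm1E.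
by case: eqP => [->|_]; rewrite ?mul1n ?mul0n.
Qed.

Lemma not_std_mono_shift f a b : Jj u j f -> is_lexlead f a -> mono_from j b ->
  ~ std_mono u j (b + a)%MM.
Proof.
by move=> Jf lead_f b_j [_]; apply; exists ('X_[b] * f); split; [apply: JjXM | apply: lexleadXM].
Qed.

(* A standard monomial is not a multiple of the leading monomial X_j^(deg p) of p(X_j), which lies in J_j. *)
Lemma std_mono_deg_lt : (exists p : {poly K},
    p != 0 /\ (size p <= B.+1)%N /\ ann u (map_poly (@mpolyC n K) p).['X_jo]) ->
  forall m, std_mono u j m -> (m jo < B)%N.
Proof.
case=> p [nz_p [size_p ann_p]] m std_m; rewrite ltnNge; apply/negP => le_Bm.
have Jp : Jj u j (map_poly (@mpolyC n K) p).['X_jo].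
  apply: (ann_Jj ann_p); rewrite horner_mpolyX; apply: poly_from_sum => k _.
  by apply/poly_fromZ/poly_fromX; rewrite -Xpow_mulmnU; apply: Xpow_mono.
have le_dm : (U_(jo) *+ (size p).-1 <= m)%MM.
  apply/mnm_lepP=> i; rewrite mulmnE mnm1E.
  by case: eqP => [<-|_]; rewrite ?mul1n ?mul0n //; apply: leq_trans le_Bm; rewrite -ltnS; lia.
have b_j : mono_from j (m - U_(jo) *+ (size p).-1)%MM.
  by move=> k lt_kj; rewrite mnmBE std_m.1.
by apply: (not_std_mono_shift Jp (lexlead_horner_mpolyX jo nz_p) b_j); rewrite submK.
Qed.

Hypothesis Bp_std : forall m, m \in Bp <-> std_mono u j.+1 m.
Hypothesis Jj_elim : forall f, Jj u j f /\ poly_from j.+1 f <-> Jj u j.+1 f.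

Lemma std_mono_subXpow_in_Bp m : std_mono u j m -> (m - Xpow n j (m jo))%MM \in Bp.
Proof.
move=> std_m; have [b_j1 Em] := mono_from_split std_m.1.
apply/Bp_std; split=> // -[f [J1f lead_f]].
have Jf := ((Jj_elim f).2 J1f).1.
by apply: (not_std_mono_shift Jf lead_f (@Xpow_mono n j (m jo))); rewrite addmC -Em.
Qed.

Lemma std_mono_in_Cset : (exists p : {poly K},
    p != 0 /\ (size p <= B.+1)%N /\ ann u (map_poly (@mpolyC n K) p).['X_jo]) ->
  forall m, std_mono u j m -> m \in Cset j Bp B.
Proof.
move=> minpoly_jo m std_m; have [_ Em] := mono_from_split std_m.1.
apply/mem_Cset; exists (m - Xpow n j (m jo))%MM, (m jo); split=> //.
- exact: std_mono_subXpow_in_Bp.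
- exact: std_mono_deg_lt.
Qed.

End StandardMonomialsInCset.

Theorem lemma6 (K : fieldType) (n t : nat) (u : 'I_t -> 'X_{1..n} -> K) (B : nat)
    (j : nat) (Bp : seq 'X_{1..n}) :
  perfect_field K ->
  (* J = ann(u_1,...,u_t) is zero-dimensional *)
  finite_quot (ann u) ->
  (* the minimal polynomial of each X_k in K[X]/J has degree <= B *)
  (forall k : 'I_n, exists p : {poly K},
      p != 0 /\ (size p <= B.+1)%N /\ ann u (map_poly (@mpolyC n K) p).['X_k]) ->
  (1 <= j <= n)%N ->
  (* B'_{j+1} : monomials of K[X_{j+1},...,X_n], of cardinality <= D_{j+1} *)
  uniq Bp ->
  (forall b, b \in Bp -> mono_from j.+1 b) ->
  (j = n -> Bp = [:: 0%MM]) ->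
  (size Bp <= Dj u j.+1)%N ->
  let C := Cset j Bp B in
  forall R : 'M[K]_(#|{: 'I_t * 'I_(size C)}|, size C),
    rref_of (Mmat u C) R ->
  let Bpj := map (fun p : 'I_(size C) => nth 0%MM C p)
                 [seq p <- enum 'I_(size C) | pivot_col R p] in
  (size Bpj <= Dj u j)%N /\
  ((j <= n.-1)%N ->
   (forall m, m \in Bp <-> std_mono u j.+1 m) ->
   (forall f, (Jj u j f /\ poly_from j.+1 f) <-> Jj u j.+1 f) ->
   forall m, m \in Bpj <-> std_mono u j m).
Proof.
move=> _ fin_ann minpoly /andP[j_ge1 j_le_n] _ Bp_mono _ _ C R rref_R Bpj.
have C_uniq : uniq C by apply: Cset_uniq.
have C_sorted : sorted (@lexle n) C by apply: Cset_sorted.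
have C_mono : forall m, m \in C -> mono_from j m by apply: Cset_mono.
split=> [|_ Bp_std Jj_elim m].
  rewrite size_map -(size_map (fun q : 'I_(size C) => 'X_[nth 0%MM C q] : {mpoly K[n]})).
  apply: size_free_Jj_le_Dj fin_ann _ _ (rref_pivots_free C_mono rref_R).
  by move=> _ /mapP[q _ ->]; apply/poly_fromX/C_mono/mem_nth.
have lt_jn : (j.-1 < n)%N by rewrite prednK.
have jo_j : (Ordinal lt_jn).+1 = j by rewrite prednK.
have C_std : forall m', std_mono u j m' -> m' \in C.
  exact: std_mono_in_Cset jo_j Bp_std Jj_elim (minpoly _).
by rewrite /Bpj; apply: mem_pivot_monomials.
Qed.
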